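(* There is a polynomial $q$ such that for every $\mathsf{TL}[\Diamond^{-}]$ program $P$ with $L(P)\neq\emptyset$ there exists a string $w\in L(P)$ with $|w|\le q(|P|)$, where $|P|$ is the size of $P$.
   Context: $\mathsf{TL}[\Diamond^{-}]$ formulas over a finite alphabet $\Sigma$: $\phi ::= \sigma \mid \neg\phi \mid \phi_1\wedge\phi_2 \mid \Diamond^{-}\phi \mid \Box^{-}\phi$ with $\sigma\in\Sigma$. At position $i$ of $w$: $w,i\models\sigma$ iff $w_i=\sigma$; Boolean connectives as usual; $w,i\models\Diamond^{-}\phi$ iff $w,j\models\phi$ for some $j<i$; $w,i\models\Box^{-}\phi$ iff $w,j\models\phi$ for all $j\le i$. $w\models\phi$ iff $w,|w|\models\phi$, and $L(\phi)=\{w:w\models\phi\}$. A program is a straight-line (DAG) representation $(\phi_1,\dots,\phi_m)$ where $\phi_i$ may refer to earlier $\phi_j$, denoting $\phi_m$; its size is the total number of symbols, each reference to an earlier line counting as 1. *)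

From mathcomp Require Import all_boot all_algebra.
Set Implicit Arguments. Unset Strict Implicit. Unset Printing Implicit Defensive.

Inductive formula (Sigma : Type) :=
| FSym of Sigma
| FNot of formula Sigma
| FAnd of formula Sigma & formula Sigma
| FDia of formula Sigma      (* w,i |= <>^- phi  iff  w,j |= phi for some position j < i *)
| FBox of formula Sigma.     (* w,i |= []^- phi  iff  w,j |= phi for all positions j <= i *)

(* Positions of w are 1..|w|; w_i is the i-th letter (1-indexed);
   letter_at w i = None when i is not a position. *)
Definition letter_at (Sigma : Type) (w : seq Sigma) (i : nat) : option Sigma :=
  if 0 < i then nth None (map Some w) i.-1 else None.

Fixpoint sat (Sigma : eqType) (w : seq Sigma) (i : nat) (phi : formula Sigma) : bool :=
  match phi with
  | FSym s => letter_at w i == Some s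
  | FNot p => ~~ sat w i p
  | FAnd p q => sat w i p && sat w i q
  | FDia p => has (fun j => sat w j p) (iota 1 i.-1)
  | FBox p => all (fun j => sat w j p) (iota 1 i)
  end.

Definition models (Sigma : eqType) (w : seq Sigma) (phi : formula Sigma) : bool :=
  sat w (size w) phi.

Definition lang (Sigma : eqType) (phi : formula Sigma) : pred (seq Sigma) :=
  fun w => models w phi.

(* Program lines: formulas that may refer (PRef k) to an earlier line k
   (lines are numbered 0, 1, ..., m-1). *)
Inductive pline (Sigma : Type) :=
| PSym of Sigma
| PNot of pline Sigma
| PAnd of pline Sigma & pline Sigma
| PDia of pline Sigma
| PBox of pline Sigma
| PRef of nat.

Definition program (Sigma : Type) := seq (pline Sigma).

(* Expansion of a line given the expansions env of the previous lines;
   None if a reference does not point to an earlier line. *)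
Fixpoint resolve (Sigma : Type) (env : seq (formula Sigma)) (l : pline Sigma)
  : option (formula Sigma) :=
  match l with
  | PSym s => Some (FSym s)
  | PNot p => omap (@FNot Sigma) (resolve env p)
  | PAnd p q =>
      match resolve env p, resolve env q with
      | Some a, Some b => Some (FAnd a b)
      | _, _ => None
      end
  | PDia p => omap (@FDia Sigma) (resolve env p)
  | PBox p => omap (@FBox Sigma) (resolve env p)
  | PRef k => onth env k
  end.

Fixpoint expand_aux (Sigma : Type) (env : seq (formula Sigma)) (P : program Sigma)
  : option (seq (formula Sigma)) :=
  match P with
  | [::] => Some env
  | l :: P' =>
      match resolve env l with
      | Some f => expand_aux (rcons env f) P'
      | None => None
      end
  end.

(* The formula denoted by a program (phi_1, ..., phi_m): its last line phi_m.
   None if the program is empty or ill-formed (a forward/self reference). *)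
Definition program_formula (Sigma : Type) (P : program Sigma) : option (formula Sigma) :=
  match expand_aux [::] P with
  | Some (f :: fs) => Some (last f fs)
  | _ => None
  end.

Fixpoint pline_size (Sigma : Type) (l : pline Sigma) : nat :=
  match l with
  | PSym _ => 1
  | PNot p => (pline_size p).+1
  | PAnd p q => (pline_size p + pline_size q).+1
  | PDia p => (pline_size p).+1
  | PBox p => (pline_size p).+1
  | PRef _ => 1
  end.

Definition program_size (Sigma : Type) (P : program Sigma) : nat :=
  \sum_(l <- P) pline_size l.

Definition prog_lang (Sigma : eqType) (P : program Sigma) : pred (seq Sigma) :=
  fun w => if program_formula P is Some phi then models w phi else false.

(* If [w |= phi], keep the last position of [w] and, for every subformula [psi]
   of [phi], the first position where [psi] holds and the first where it fails.
   The subword on these positions satisfies every subformula at every kept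
   position exactly as [w] does: a past modality evaluated at a kept position
   only needs an earliest witness, and earliest witnesses are kept.  A program
   [P] denotes a formula with at most [|P|] distinct subformulas, so the
   subword has length at most [2|P| + 1]. *)

From HB Require Import structures.
From mathcomp Require Import all_boot all_algebra zify.

Set Implicit Arguments. Unset Strict Implicit. Unset Printing Implicit Defensive.

Section Subformulas.
Variable Sigma : eqType.

Definition formula_eq_dec : comparable (formula Sigma).
Proof. rewrite /comparable /decidable; decide equality; exact: eq_comparable. Defined.

HB.instance Definition _ := hasDecEq.Build (formula Sigma) (compareP formula_eq_dec).

Fixpoint subformulas (phi : formula Sigma) : seq (formula Sigma) :=
  phi :: match phi with
         | FSym _ => [::]
         | FNot p | FDia p | FBox p => subformulas p
         | FAnd p q => subformulas p ++ subformulas q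
         end.

Lemma subformulas_self phi : phi \in subformulas phi.
Proof. by case: phi => *; apply: mem_head. Qed.

End Subformulas.

Lemma leq_predR m n : 0 < m -> (m <= n.-1) = (m < n).
Proof. by case: m => // m _; rewrite ltn_predRL. Qed.

Definition early_witnessed (K : seq nat) (n : nat) (P : pred nat) :=
  forall j, 0 < j <= n -> P j -> exists2 k, k \in K & (k <= j) && P k.

Section Restriction.
Variables (Sigma : eqType) (w : seq Sigma) (K : seq nat).
Hypotheses (K_sorted : sorted ltn (0 :: K)) (K_le_size : all (leq^~ (size w)) K).

Definition restrict_word := pmap (letter_at w) K.

(* The sentinel [0] fits the 1-based positions of [sat]: position 0, where
   every modality is vacuous, is mapped to itself. *)
Definition restrict_pos t := nth 0 (0 :: K) t.
Local Notation pos := restrict_pos.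

Lemma pos_leq : {in [pred t | t <= size K] &, {mono pos : s t / s <= t}}.
Proof. by apply: leq_mono_in; apply: sorted_ltn_nth ltn_trans _ _ K_sorted. Qed.

Lemma pos_ltn : {in [pred t | t <= size K] &, {mono pos : s t / s < t}}.
Proof. exact/leqW_mono_in/pos_leq. Qed.

Lemma pos_gt0 t : 0 < t <= size K -> 0 < pos t.
Proof. by case/andP=> t0 tK; rewrite -[0]/(pos 0) pos_ltn. Qed.

Lemma pos_le_size t : pos t <= size w.
Proof.
rewrite /restrict_pos; case: t => //= t.
have [tK | Kt] := ltnP t (size K); last by rewrite nth_default.
by apply: (allP K_le_size); apply: mem_nth.
Qed.

Lemma pos_surj k : k \in K -> exists2 t, 0 < t <= size K & pos t = k.
Proof. by move=> kK; exists (index k K).+1; rewrite /restrict_pos /= ?index_mem ?nth_index. Qed.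

Lemma all_letter_at : all [eta letter_at w] K.
Proof.
apply/allP=> k /pos_surj[t tK <-].
by rewrite /letter_at pos_gt0 // -onthE onthTE prednK ?pos_le_size ?pos_gt0.
Qed.

Lemma size_restrict_word : size restrict_word = size K.
Proof. by apply/eqP; rewrite size_pmap -all_count all_letter_at. Qed.

Lemma letter_at_restrict t : t <= size K ->
  letter_at restrict_word t = letter_at w (pos t).
Proof.
case: t => // t tK; rewrite [LHS]/letter_at /= pmapS_filter.
by rewrite (all_filterP all_letter_at) (nth_map 0).
Qed.

Lemma has_restrict_pos (P : pred nat) m y :
  early_witnessed K (size w) P -> m <= size K -> y <= size w ->
  {in [pred t | 0 < t <= size K], forall t, (t <= m) = (pos t <= y)} ->
  has (P \o pos) (iota 1 m) = has P (iota 1 y).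
Proof.
move=> witP mK yw kept; apply/hasP/hasP=> [[t] | [j]]; rewrite mem_iota add1n ltnS.
  case/andP=> t0 tm Pt; have tK : 0 < t <= size K by rewrite t0 (leq_trans tm).
  by exists (pos t); rewrite // mem_iota add1n ltnS pos_gt0 // -kept.
case/andP=> j0 jy Pj; have [|k kK /andP[kj Pk]] := witP j _ Pj.
  by rewrite j0 (leq_trans jy).
have [t tK tk] := pos_surj kK; exists t; last by rewrite /= tk.
by rewrite mem_iota add1n ltnS kept // tk (leq_trans kj jy) andbT; case/andP: tK.
Qed.

Lemma sat_restrict (E : seq (formula Sigma)) phi :
  (forall g, g \in E -> early_witnessed K (size w) (sat w ^~ g)
                     /\ early_witnessed K (size w) (predC (sat w ^~ g))) ->
  {subset subformulas phi <= E} ->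
  forall t, t <= size K -> sat restrict_word t phi = sat w (pos t) phi.
Proof.
move=> witE; elim: phi => [a | p IH | p IHp q IHq | p IH | p IH] /= subE t tK.
- by rewrite letter_at_restrict.
- by rewrite IH // => g gp; apply: subE; rewrite inE gp orbT.
- by rewrite IHp ?IHq // => g gpq; apply: subE; rewrite inE mem_cat gpq ?orbT.
all: have {}IH s : s <= size K -> sat restrict_word s p = sat w (pos s) p
       by apply: IH => g gp; apply: subE; rewrite inE gp orbT.
all: have /witE[witp witNp] : p \in E by apply: subE; rewrite inE subformulas_self orbT.
- transitivity (has (sat w ^~ p \o pos) (iota 1 t.-1)).
    apply: eq_in_has => s; rewrite mem_iota add1n ltnS => /andP[_ st].
    by apply/IH/(leq_trans st)/(leq_trans (leq_pred t)).
  apply: has_restrict_pos => // [||s /andP[s0 sK]].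
  + exact: leq_trans (leq_pred t) tK.
  + exact: leq_trans (leq_pred _) (pos_le_size t).
  + by rewrite !leq_predR ?pos_gt0 ?s0 // pos_ltn.
- rewrite -[LHS]negbK -[RHS]negbK -!has_predC; congr (~~ _).
  transitivity (has (predC (sat w ^~ p) \o pos) (iota 1 t)).
    apply: eq_in_has => s; rewrite mem_iota add1n ltnS => /andP[_ st].
    by rewrite /= IH // (leq_trans st).
  by apply: has_restrict_pos => // [|s /andP[_ sK]]; rewrite ?pos_le_size ?pos_leq.
Qed.

End Restriction.

Definition first_pos (P : pred nat) n := (find P (iota 1 n)).+1.

Lemma early_witnessed_first_pos K n (P : pred nat) :
  (first_pos P n <= n -> first_pos P n \in K) -> early_witnessed K n P.
Proof.
move=> firstK j /andP[j0 jn] Pj; have hasP : has P (iota 1 n).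
  by apply/hasP; exists j; rewrite // mem_iota add1n ltnS j0.
have first_n : first_pos P n <= n by move: hasP; rewrite has_find size_iota.
exists (first_pos P n); first exact: firstK.
have := nth_find 0 hasP; rewrite nth_iota // add1n => ->; rewrite andbT.
rewrite ltnNge; apply/negP => j_find.
have /(before_find 0) : j.-1 < find P (iota 1 n) by rewrite prednK.
by rewrite nth_iota ?add1n ?prednK // Pj.
Qed.

Section SmallModel.
Variables (Sigma : eqType) (w : seq Sigma) (E : seq (formula Sigma)).

Definition witness_positions :=
  size w :: flatten [seq [:: first_pos (sat w ^~ g) (size w);
                            first_pos (predC (sat w ^~ g)) (size w)] | g <- E].

Definition kept_positions := [seq k <- iota 1 (size w) | k \in witness_positions].

Lemma kept_positions_sorted : sorted ltn (0 :: kept_positions).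
Proof. exact: path_filter ltn_trans _ _ _ (iota_ltn_sorted 0 (size w).+1). Qed.

Lemma kept_positions_le_size : all (leq^~ (size w)) kept_positions.
Proof. by apply/allP=> k; rewrite mem_filter mem_iota add1n ltnS => /and3P[]. Qed.

Lemma size_kept_positions : size kept_positions <= (size E).*2.+1.
Proof.
have -> : (size E).*2.+1 = size witness_positions.
  by rewrite /= size_flatten; congr _.+1; elim: E => //= g E' <-; rewrite doubleS.
apply: uniq_leq_size => [|k]; first by rewrite filter_uniq ?iota_uniq.
by rewrite mem_filter => /andP[].
Qed.

Lemma kept_positions_witness g : g \in E ->
  early_witnessed kept_positions (size w) (sat w ^~ g)
  /\ early_witnessed kept_positions (size w) (predC (sat w ^~ g)).
Proof.
move=> gE; split; apply: early_witnessed_first_pos => first_n.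
all: rewrite mem_filter mem_iota add1n ltnS first_n !andbT in_cons.
all: by apply/orP; right; apply/flatten_mapP; exists g; rewrite // !in_cons eqxx ?orbT.
Qed.

Lemma restrict_pos_kept_last : 0 < size w ->
  restrict_pos kept_positions (size kept_positions) = size w.
Proof.
move=> w0; rewrite /restrict_pos /kept_positions.
have -> : iota 1 (size w) = rcons (iota 1 (size w).-1) (size w).
  by rewrite -cats1 -[in LHS](prednK w0) -(addn1 (size w).-1) iotaD add1n prednK.
by rewrite filter_rcons mem_head size_rcons /= nth_rcons ltnn eqxx.
Qed.

End SmallModel.

Lemma small_model (Sigma : eqType) (w : seq Sigma) (E : seq (formula Sigma)) phi :
  {subset subformulas phi <= E} -> models w phi ->
  exists2 w' : seq Sigma, models w' phi & size w' <= (size E).*2.+1.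
Proof.
move=> subE w_phi; have [w0 | w_pos] := posnP (size w); first by exists w; rewrite ?w0.
have Ks := kept_positions_sorted w E; have Kw := kept_positions_le_size w E.
exists (restrict_word w (kept_positions w E)); last first.
  by rewrite size_restrict_word ?size_kept_positions.
rewrite /models size_restrict_word // (sat_restrict Ks Kw (@kept_positions_witness _ w E)) //.
by rewrite restrict_pos_kept_last.
Qed.

Lemma subset_cons_cat (T : eqType) (x : T) (s1 s2 s3 : seq T) :
  {subset s1 <= s2 ++ s3} -> {subset x :: s1 <= (x :: s2) ++ s3}.
Proof. by move=> sub y; rewrite !in_cons => /predU1P[-> | /sub ->]; rewrite ?eqxx ?orbT. Qed.

Section ProgramSubformulas.
Variable Sigma : eqType.

Definition subformula_closed (E env : seq (formula Sigma)) :=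
  forall f, f \in env -> {subset subformulas f <= E}.

Lemma resolve_subformulas env E (l : pline Sigma) f :
  subformula_closed E env -> resolve env l = Some f ->
  exists2 s, size s <= pline_size l & {subset subformulas f <= s ++ E}.
Proof.
move=> closedE; elim: l f => [a | p IH | p IHp q IHq | p IH | p IH | k] f /=.
- by case=> <-; exists [:: FSym a] => // g; rewrite mem_cat => ->.
- case e: (resolve env p) => [a|] //= [<-]; have [s size_s sub_a] := IH a e.
  by exists (FNot a :: s); last exact: subset_cons_cat.
- case e1: (resolve env p) => [a|] //; case e2: (resolve env q) => [b|] // [<-].
  have [s1 size_s1 sub_a] := IHp a e1; have [s2 size_s2 sub_b] := IHq b e2.
  exists (FAnd a b :: s1 ++ s2); first by rewrite /= size_cat ltnS leq_add.
  apply: subset_cons_cat => g; rewrite !mem_cat => /orP[/sub_a | /sub_b].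
    by rewrite mem_cat => /orP[] ->; rewrite ?orbT.
  by rewrite mem_cat => /orP[] ->; rewrite ?orbT.
- case e: (resolve env p) => [a|] //= [<-]; have [s size_s sub_a] := IH a e.
  by exists (FDia a :: s); last exact: subset_cons_cat.
- case e: (resolve env p) => [a|] //= [<-]; have [s size_s sub_a] := IH a e.
  by exists (FBox a :: s); last exact: subset_cons_cat.
- by move=> env_k; exists [::] => //; apply: closedE; apply/onthP; exists k.
Qed.

Lemma expand_aux_subformulas env env' E (P : program Sigma) :
  subformula_closed E env -> expand_aux env P = Some env' ->
  exists2 E', size E' <= size E + program_size P & subformula_closed E' env'.
Proof.
elim: P env E => [|l P IH] env E closedE /=.
  by case=> <-; exists E; rewrite // /program_size big_nil addn0.
case e: (resolve env l) => [f|] // expandP.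
have [s size_s sub_f] := resolve_subformulas closedE e.
have closed_sE : subformula_closed (s ++ E) (rcons env f).
  move=> g; rewrite mem_rcons in_cons => /predU1P[-> // | g_env] h h_g.
  by rewrite mem_cat (closedE g g_env h h_g) orbT.
have [E' size_E' closed_E'] := IH _ _ closed_sE expandP.
exists E' => //; rewrite /program_size big_cons; move: size_E'.
rewrite size_cat /program_size; lia.
Qed.

Lemma program_formula_subformulas (P : program Sigma) phi :
  program_formula P = Some phi ->
  exists2 E, size E <= program_size P & {subset subformulas phi <= E}.
Proof.
rewrite /program_formula; case e: (expand_aux [::] P) => [[|f fs]|] // [<-].
have [//|E size_E closedE] := @expand_aux_subformulas [::] _ [::] _ _ e.
by exists E => //; apply: closedE; apply: mem_last.
Qed.

End ProgramSubformulas.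

Local Open Scope ring_scope.

Theorem lemma4p5 (Sigma : finType) :
  exists q : {poly nat},
    forall P : program Sigma,
      (exists w : seq Sigma, prog_lang P w) ->
      exists w : seq Sigma, prog_lang P w /\ (size w <= q.[program_size P])%N.
Proof.
exists ('X *+ 2 + 1) => P [w]; rewrite /prog_lang.
case ePhi: (program_formula P) => [phi|] // w_phi.
have [E size_E sub_E] := program_formula_subformulas ePhi.
have [w' w'_phi size_w'] := small_model sub_E w_phi.
exists w'; split => //; apply: (leq_trans size_w').
rewrite !hornerE -[X in (_ <= X)%N]/(program_size P + program_size P + 1)%N.
by rewrite -addnn addn1 ltnS leq_add.
Qed.
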